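(* Let $G=(V,E)$ be a cactus. Then the diameter $d(\mathrm{CUT}(G))$ of the 1-skeleton of $\mathrm{CUT}(G)$ satisfies $$\left\lfloor \frac{|V|}{2}\right\rfloor \le d(\mathrm{CUT}(G)) \le |V|-1.$$
   Context: For an undirected graph $G=(V,E)$ and $S\subseteq V$, $\delta(S)\subseteq E$ denotes the set of edges with exactly one endpoint in $S$, and $\mathbf v(S)\in\{0,1\}^{E}$ is its incidence vector ($v(S)_e=1$ iff $e\in\delta(S)$). The cut polytope is $\mathrm{CUT}(G)=\operatorname{conv}\{\mathbf v(S):S\subseteq V\}\subset\mathbb R^{E}$. The 1-skeleton of a polytope is the graph whose vertices are the polytope's vertices and whose edges are its one-dimensional faces; $d(\cdot)$ denotes the diameter (maximum shortest-path edge distance between two vertices) of this graph. A cactus is a connected graph in which every edge belongs to at most one simple cycle. *)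

From mathcomp Require Import all_boot all_order all_algebra.
From mathcomp Require Import reals.
Set Implicit Arguments. Unset Strict Implicit. Unset Printing Implicit Defensive.
Import Order.TTheory GRing.Theory Num.Theory.
Local Open Scope ring_scope.

(* A simple graph on a finite vertex type V is a symmetric irreflexive
   relation e; its edges are the 2-element sets {u,v} with e u v. *)
Definition edges (V : finType) (e : rel V) : {set {set V}} :=
  [set s : {set V} | [exists u, exists v, e u v && (s == [set u; v])]].

Definition edge_t (V : finType) (e : rel V) := {s : {set V} | s \in edges e}.

Definition simple_cycle (V : finType) (e : rel V) (s : seq V) : bool :=
  [&& cycle e s, uniq s & 2 < size s]%N.

Definition cycle_edges (V : finType) (s : seq V) : {set {set V}} :=
  [set [set x; next s x] | x in s].

(* cactus: connected, every edge lies on at most one simple cycle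
   (cycles considered as subgraphs, i.e. through their edge sets) *)
Definition is_cactus (V : finType) (e : rel V) : Prop :=
  (forall u v : V, connect e u v) /\
  (forall s1 s2 : seq V, simple_cycle e s1 -> simple_cycle e s2 ->
     forall f : {set V}, f \in cycle_edges s1 -> f \in cycle_edges s2 ->
     cycle_edges s1 = cycle_edges s2).

Definition cutvec (R : realType) (V : finType) (e : rel V) (S : {set V})
  : edge_t e -> R := fun f => (#|val f :&: S| == 1%N)%:R.

Section Poly.
Variables (R : realType) (I J : finType) (pt : I -> J -> R).

Definition dot (c x : J -> R) : R := \sum_j c j * x j.

Definition in_conv (x : J -> R) : Prop :=
  exists l : I -> R, (forall i, 0 <= l i) /\ \sum_i l i = 1 /\
    forall j, x j = \sum_i l i * pt i j.

Definition is_face (F : (J -> R) -> Prop) : Prop :=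
  exists (c : J -> R) (b : R), (forall i, dot c (pt i) <= b) /\
    forall x, F x <-> (in_conv x /\ dot c x = b).

Definition is_vertex (p : J -> R) : Prop := is_face (fun x => x = p).

Definition segment (p q : J -> R) (x : J -> R) : Prop :=
  exists t : R, 0 <= t <= 1 /\ x = (fun j => (1 - t) * p j + t * q j).

(* edges of the 1-skeleton: one-dimensional faces, i.e. segments [p,q]
   between distinct vertices p, q that are faces *)
Definition adjacent (p q : J -> R) : Prop :=
  [/\ is_vertex p, is_vertex q, p <> q & is_face (segment p q)].

Fixpoint reach (k : nat) (p q : J -> R) : Prop :=
  match k with
  | O => p = q
  | S k' => reach k' p q \/ exists r, adjacent p r /\ reach k' r q
  end.

Definition is_diameter (d : nat) : Prop :=
  (forall p q, is_vertex p -> is_vertex q -> reach d p q) /\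
  (forall d' : nat, (d' < d)%N ->
     exists p q, [/\ is_vertex p, is_vertex q & ~ reach d' p q]).
End Poly.

(* Fix a BFS spanning tree of G rooted at r.  Flipping a set S by the subtree
   below a vertex v != r toggles exactly one tree edge, and v(S) and the flipped
   cut vector are adjacent: among 0/1 points, only they agree with both on the
   coordinates where they agree.  A cut is determined by its tree edges, so at
   most |V| - 1 flips join any two cut vectors.
   Conversely, adjacent v(S), v(T) differ in at most two edges when G is a cactus.
   Write S + T for the symmetric difference.  If a side of S + T is disconnected,
   delta(S + T) splits as delta(U1) + delta(U2) and v(S) + v(T) = v(S + U1) +
   v(S + U2), so [v(S), v(T)] is not an edge; otherwise three edges of delta(S + T)
   would yield two distinct cycles through a common edge.  The odd-depth vertices
   cut all |V| - 1 tree edges, so their cut vector is at distance at least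
   (|V| - 1) / 2 from v(set0). *)

From mathcomp Require Import all_boot all_order all_algebra.
From mathcomp Require Import reals.
From mathcomp Require Import ring lra zify.
From Stdlib Require Import FunctionalExtensionality Classical.
Set Implicit Arguments. Unset Strict Implicit. Unset Printing Implicit Defensive.
Import Order.TTheory GRing.Theory Num.Theory.
Local Open Scope ring_scope.

Lemma classic_ex_minn (P : nat -> Prop) n : P n ->
  exists k, P k /\ forall j, (j < k)%N -> ~ P j.
Proof.
elim/ltn_ind: n => n IH Pn.
case: (classic (exists2 j, (j < n)%N & P j)) => [[j hj Pj]|none]; first exact: IH hj Pj.
by exists n; split => // j hj Pj; apply: none; exists j.
Qed.

Section ConvexHull.
Variables (R : realType) (I J : finType) (pt : I -> J -> R).

Lemma exists_neq_coord (p q : J -> R) : p <> q -> exists j, p j != q j.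
Proof.
move=> hpq; apply: NNPP => hn; apply: hpq; apply: functional_extensionality => j.
by apply: NNPP => h; apply: hn; exists j; apply/eqP.
Qed.

Lemma dot_convex_comb c x (l : I -> R) : (forall j, x j = \sum_i l i * pt i j) ->
  dot c x = \sum_i l i * dot c (pt i).
Proof.
move=> hx; rewrite /dot.
under eq_bigr => j _ do rewrite hx big_distrr /=.
rewrite exchange_big /=; apply: eq_bigr => i _; rewrite big_distrr /=.
by apply: eq_bigr => j _; rewrite mulrCA.
Qed.

Lemma dot_segment (c p q : J -> R) t :
  dot c (fun j => (1 - t) * p j + t * q j) = (1 - t) * dot c p + t * dot c q.
Proof. by rewrite /dot !mulr_sumr -big_split; apply: eq_bigr => j _ /=; ring. Qed.

Lemma segment_left (p q : J -> R) : segment p q p.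
Proof.
exists 0; split; first by rewrite lexx ler01.
by apply: functional_extensionality => j; rewrite subr0 mul1r mul0r addr0.
Qed.

Lemma segment_right (p q : J -> R) : segment p q q.
Proof.
exists 1; split; first by rewrite lexx ler01.
by apply: functional_extensionality => j; rewrite subrr mul0r mul1r add0r.
Qed.

Lemma in_conv_segment i0 i1 x : segment (pt i0) (pt i1) x -> in_conv pt x.
Proof.
case=> t [/andP[t0 t1] ->].
have delta_sum (i' : I) (F : I -> R) : \sum_i (i == i')%:R * F i = F i'.
  by rewrite (bigD1 i') //= eqxx mul1r big1 ?addr0 // => i /negbTE ->; rewrite mul0r.
have delta_sum1 (i' : I) : \sum_i (i == i')%:R = 1 :> R.
  by rewrite (bigD1 i') //= eqxx big1 ?addr0 // => i /negbTE ->.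
exists (fun i => (1 - t) * (i == i0)%:R + t * (i == i1)%:R); split.
  by move=> i; rewrite addr_ge0 // mulr_ge0 // subr_ge0.
split; first by rewrite big_split /= -!mulr_sumr !delta_sum1 !mulr1 subrK.
move=> j; under eq_bigr => i _ do rewrite mulrDl -!mulrA.
by rewrite big_split /= -!mulr_sumr !delta_sum.
Qed.

Lemma in_conv_pt i : in_conv pt (pt i).
Proof. exact: in_conv_segment (segment_left _ _). Qed.

Lemma tight_support c b (l : I -> R) : (forall i, dot c (pt i) <= b) ->
  (forall i, 0 <= l i) -> \sum_i l i = 1 -> \sum_i l i * dot c (pt i) = b ->
  forall i, l i != 0 -> dot c (pt i) = b.
Proof.
move=> hb hl hs hd i li0.
have slack0 : \sum_k l k * (b - dot c (pt k)) = 0.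
  under eq_bigr => k _ do rewrite mulrBr.
  by rewrite sumrB hd -mulr_suml hs mul1r subrr.
have slack_ge0 k : predT k -> 0 <= l k * (b - dot c (pt k)).
  by move=> _; rewrite mulr_ge0 // subr_ge0.
move: (psumr_eq0P slack_ge0 slack0 (i:=i) isT) => /eqP.
by rewrite mulf_eq0 (negbTE li0) /= subr_eq0 => /eqP.
Qed.

Lemma vertex_pt p : is_vertex pt p -> exists i, p = pt i.
Proof.
case=> c [b [hb hF]].
have [[l [hl [hs hx]]] hd] := proj1 (hF p) erefl.
have [i li0] : exists i, l i != 0.
  apply: NNPP => hn; move: hs; rewrite big1 => [/eqP|i _].
    by rewrite eq_sym oner_eq0.
  by apply: NNPP => hi; apply: hn; exists i; apply/eqP.
exists i; symmetry; apply/hF; split; first exact: in_conv_pt.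
by apply: (tight_support hb hl hs _ li0); rewrite -(dot_convex_comb c hx).
Qed.

Lemma reach_le k k' p q : (k <= k')%N -> reach pt k p q -> reach pt k' p q.
Proof. by move=> /subnK <- h; elim: (k' - k)%N => [|i IH] //=; left. Qed.

Definition hamming (p q : J -> R) := #|[set j | p j != q j]|.

Lemma hamming_refl p : hamming p p = 0%N.
Proof. by apply/eqP; rewrite cards_eq0; apply/eqP/setP => j; rewrite !inE eqxx. Qed.

Lemma hamming_triangle p q r : (hamming p r <= hamming p q + hamming q r)%N.
Proof.
apply: leq_trans (leq_card_setU [set j | p j != q j] [set j | q j != r j]).
apply: subset_leq_card; apply/subsetP => j; rewrite !inE.
by case: (p j =P q j) => [->|].
Qed.

Lemma reach_hamming c :
  (forall i i', adjacent pt (pt i) (pt i') -> (hamming (pt i) (pt i') <= c)%N) ->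
  forall k p q, reach pt k p q -> (hamming p q <= c * k)%N.
Proof.
move=> hc; elim=> [|k IH] p q /=; first by move=> ->; rewrite hamming_refl.
case=> [/IH|[r [hpr /IH hrq]]].
  by move/leq_trans; apply; rewrite leq_mul2l leqnSn orbT.
rewrite mulnS; apply: leq_trans (hamming_triangle p r q) (leq_add _ hrq).
by have [/vertex_pt [i ep] /vertex_pt [i' er] _ _] := hpr; subst p r; apply: hc.
Qed.

Hypothesis pt01 : forall i j, pt i j = 0 \/ pt i j = 1.

(* Over 0/1 points, [(2 p_j - 1) x_j] is maximal exactly when [x_j = p_j]. *)
Definition agree_coef (A : pred J) (p : J -> R) j := if A j then 2 * p j - 1 else 0.

Lemma agree_ineq_valid A i0 i :
  dot (agree_coef A (pt i0)) (pt i) <= dot (agree_coef A (pt i0)) (pt i0).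
Proof.
apply: ler_sum => j _; rewrite /agree_coef; case: (A j); last by rewrite !mul0r.
by case: (pt01 i0 j) => ->; case: (pt01 i j) => ->; lra.
Qed.

Lemma agree_ineq_tight A i0 i :
  dot (agree_coef A (pt i0)) (pt i) = dot (agree_coef A (pt i0)) (pt i0) <->
  (forall j, A j -> pt i j = pt i0 j).
Proof.
split=> [heq j Aj|h]; last first.
  apply: eq_bigr => j _; rewrite /agree_coef.
  by case Aj: (A j); [rewrite (h j Aj) | rewrite !mul0r].
set c := agree_coef A (pt i0).
have slack0 : \sum_k (c k * pt i0 k - c k * pt i k) = 0.
  by rewrite sumrB -[\sum_k c k * pt i0 k]/(dot c (pt i0)) -heq subrr.
have slack_ge0 k : predT k -> 0 <= c k * pt i0 k - c k * pt i k.
  move=> _; rewrite /c /agree_coef; case: (A k); last by rewrite !mul0r subrr.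
  by case: (pt01 i0 k) => ->; case: (pt01 i k) => ->; lra.
move: (psumr_eq0P slack_ge0 slack0 (i:=j) isT); rewrite /c /agree_coef Aj.
by case: (pt01 i0 j) => ->; case: (pt01 i j) => ->; lra.
Qed.

Lemma face_agree A i0 x :
  in_conv pt x -> dot (agree_coef A (pt i0)) x = dot (agree_coef A (pt i0)) (pt i0) ->
  exists2 l : I -> R,
    [/\ forall i, 0 <= l i, \sum_i l i = 1 & forall j, x j = \sum_i l i * pt i j] &
    forall i, l i != 0 -> forall j, A j -> pt i j = pt i0 j.
Proof.
case=> l [hl [hs hx]] hd; exists l => // i li0; apply/agree_ineq_tight.
apply: (tight_support (@agree_ineq_valid A i0) hl hs _ li0).
by rewrite -(dot_convex_comb _ hx).
Qed.

Lemma is_vertex_pt i0 : is_vertex pt (pt i0).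
Proof.
exists (agree_coef predT (pt i0)), (dot (agree_coef predT (pt i0)) (pt i0)).
split=> [i|x]; first exact: agree_ineq_valid.
split=> [->|[hx hd]]; first by split; [exact: in_conv_pt|].
have [l [hl0 hs hxl] hl] := face_agree hx hd.
apply: functional_extensionality => j; rewrite hxl.
transitivity (\sum_i l i * pt i0 j); last by rewrite -mulr_suml hs mul1r.
by apply: eq_bigr => i _; have [->|/hl/(_ j isT) ->] := eqVneq (l i) 0; rewrite ?mul0r.
Qed.

Lemma conv2_segment i0 i1 (l : I -> R) : pt i0 <> pt i1 ->
  (forall i, 0 <= l i) -> \sum_i l i = 1 ->
  (forall i, l i != 0 -> pt i = pt i0 \/ pt i = pt i1) ->
  segment (pt i0) (pt i1) (fun j => \sum_i l i * pt i j).
Proof.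
move=> /exists_neq_coord [j0 hj0] hl0 hs hl.
(* the weight of [pt i1] is read off at a coordinate where the endpoints differ *)
pose t := \sum_i l i * (pt i j0 != pt i0 j0)%:R.
have hterm i j : l i * pt i j =
    l i * pt i0 j + l i * (pt i j0 != pt i0 j0)%:R * (pt i1 j - pt i0 j).
  have [->|/hl [] ->] := eqVneq (l i) 0; first by rewrite !mul0r add0r.
    by rewrite eqxx mulr0 mul0r addr0.
  by rewrite eq_sym hj0 mulr1; ring.
exists t; split.
  apply/andP; split; first by apply: sumr_ge0 => i _; rewrite mulr_ge0.
  by rewrite -hs; apply: ler_sum => i _; case: (_ != _); rewrite ?mulr1 ?mulr0.
apply: functional_extensionality => j; under eq_bigr => i _ do rewrite hterm.
by rewrite big_split /= -!mulr_suml hs mul1r -/t; ring.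
Qed.

Lemma adjacent_pt i0 i1 : pt i0 <> pt i1 ->
  (forall i, (forall j, pt i0 j = pt i1 j -> pt i j = pt i0 j) ->
     pt i = pt i0 \/ pt i = pt i1) ->
  adjacent pt (pt i0) (pt i1).
Proof.
move=> hne hagree; split; [exact: is_vertex_pt | exact: is_vertex_pt | exact: hne |].
pose A j := pt i0 j == pt i1 j.
have tight1 : dot (agree_coef A (pt i0)) (pt i1) = dot (agree_coef A (pt i0)) (pt i0).
  by apply/agree_ineq_tight => j /eqP.
exists (agree_coef A (pt i0)), (dot (agree_coef A (pt i0)) (pt i0)).
split=> [i|x]; first exact: agree_ineq_valid.
split=> [hx|[hx hd]].
  split; first exact: in_conv_segment hx.
  by case: hx => t [_ ->]; rewrite dot_segment tight1; ring.
have [l [hl0 hs hxl] hl] := face_agree hx hd.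
have -> : x = (fun j => \sum_i l i * pt i j) by apply: functional_extensionality.
apply: conv2_segment => // i /hl h.
by apply: hagree => j /eqP; apply: h.
Qed.

(* A face containing [pt i0] and [pt i1] also contains [pt k]. *)
Lemma not_adjacent_pt i0 i1 k l :
  (forall j, pt i0 j + pt i1 j = pt k j + pt l j) -> pt k <> pt i0 -> pt k <> pt i1 ->
  ~ adjacent pt (pt i0) (pt i1).
Proof.
move=> hsum hk0 hk1 [_ _ /exists_neq_coord [j0 hj0] [c [b [hb hF]]]].
have hd0 : dot c (pt i0) = b by apply: (proj2 (proj1 (hF _) (segment_left _ _))).
have hd1 : dot c (pt i1) = b by apply: (proj2 (proj1 (hF _) (segment_right _ _))).
have hdk : dot c (pt k) = b.
  have : dot c (pt k) + dot c (pt l) = b + b.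
    rewrite -{1}hd0 -hd1 /dot -!big_split; apply: eq_bigr => j _ /=.
    by rewrite -!mulrDr hsum.
  by have := hb k; have := hb l; lra.
have [t [/andP [t0 t1] hkt]] := proj2 (hF (pt k)) (conj (in_conv_pt k) hdk).
have ht : t = 0 \/ t = 1.
  have := congr1 (fun x => x j0) hkt => /=.
  case: (pt01 k j0) => ->; move: hj0; case: (pt01 i0 j0) => ->; case: (pt01 i1 j0) => ->;
    rewrite ?eqxx // => _; lra.
by case: ht hkt => -> hkt; [apply: hk0 | apply: hk1]; rewrite hkt;
   apply: functional_extensionality => j; rewrite /=; ring.
Qed.

End ConvexHull.

Lemma eq_set2 (T : finType) (a b c d : T) : [set a; b] = [set c; d] ->
  (a = c /\ b = d) \/ (a = d /\ b = c).
Proof.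
move=> h.
have ha : a \in [set c; d] by rewrite -h set21.
have hb : b \in [set c; d] by rewrite -h set22.
have hc : c \in [set a; b] by rewrite h set21.
have hd : d \in [set a; b] by rewrite h set22.
by move: ha hb hc hd; rewrite !inE; do 4! case/orP => /eqP ?; subst; auto.
Qed.

Lemma next_last (T : eqType) (x : T) p : uniq (x :: p) -> next (x :: p) (last x p) = x.
Proof. by move=> hu; rewrite next_nth mem_last index_last // nth_default. Qed.

Section CutVectors.
Variables (R : realType) (V : finType) (e : rel V).
Hypotheses (e_sym : symmetric e) (e_irr : irreflexive e).
Local Notation cv := (@cutvec R V e).

Definition cross (S : {set V}) x y := (x \in S) (+) (y \in S).

Definition symdiff (A B : {set V}) := [set z | (z \in A) (+) (z \in B)].

Lemma cross_symdiff A B x y : cross (symdiff A B) x y = cross A x y (+) cross B x y.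
Proof. by rewrite /cross !inE addbACA. Qed.

Lemma cross_setC X x y : cross (~: X) x y = cross X x y.
Proof. by rewrite /cross !inE addbN addNb negbK. Qed.

Lemma card_set2I_eq1 x y (S : {set V}) : x != y ->
  (#|[set x; y] :&: S| == 1%N) = cross S x y.
Proof.
move=> nxy.
have -> : [set x; y] :&: S = [set z in [seq z <- [:: x; y] | z \in S]].
  by apply/setP => z; rewrite !inE mem_filter !inE andbC.
rewrite cardsE (card_uniqP _); last by rewrite filter_uniq //= inE nxy.
by rewrite /cross /=; case: (x \in S); case: (y \in S).
Qed.

Lemma edge_tP (f : edge_t e) : exists x y, e x y /\ val f = [set x; y].
Proof.
case: f => s /=; rewrite inE => /existsP [x /existsP [y /andP [exy /eqP ->]]].
by exists x, y.
Qed.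

Lemma mem_edges x y : e x y -> [set x; y] \in edges e.
Proof.
by move=> exy; rewrite inE; apply/existsP; exists x; apply/existsP; exists y; rewrite exy eqxx.
Qed.

Definition edge_of x y (exy : e x y) : edge_t e := exist _ [set x; y] (mem_edges exy).

Lemma cutvecE S (f : edge_t e) x y : e x y -> val f = [set x; y] ->
  cv S f = (cross S x y)%:R.
Proof.
move=> exy hf; rewrite /cutvec hf card_set2I_eq1 //.
by apply: contraTneq exy => ->; rewrite e_irr.
Qed.

Lemma cutvec_edge S x y (exy : e x y) : cv S (edge_of exy) = (cross S x y)%:R.
Proof. exact: cutvecE. Qed.

Lemma cutvec01 S f : cv S f = 0 \/ cv S f = 1.
Proof. by rewrite /cutvec; case: (_ == _); [right|left]. Qed.

Lemma cutvec_eqE S T x y (exy : e x y) :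
  (cv S (edge_of exy) == cv T (edge_of exy)) = (cross S x y == cross T x y).
Proof. by rewrite !cutvec_edge eqr_nat; case: cross; case: cross. Qed.

Lemma cutvec_neq S T f x y : e x y -> val f = [set x; y] ->
  (cv S f != cv T f) = cross (symdiff S T) x y.
Proof.
move=> exy hf; rewrite !(cutvecE _ exy hf) cross_symdiff eqr_nat.
by case: cross; case: cross.
Qed.

Lemma eq_cutvec S T : (forall x y, e x y -> ~~ cross (symdiff S T) x y) -> cv S = cv T.
Proof.
move=> h; apply: functional_extensionality => f; have [x [y [exy hf]]] := edge_tP f.
by apply/eqP; rewrite -[_ == _]negbK (cutvec_neq _ _ exy hf) h.
Qed.

(* [v(S) + v(T) = v(S + U1) + v(S + U2)], where [+] is the symmetric difference. *)
Lemma not_adjacent_split S T U1 U2 :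
  (forall x y, e x y -> cross (symdiff S T) x y = cross U1 x y (+) cross U2 x y) ->
  (forall x y, e x y -> ~~ (cross U1 x y && cross U2 x y)) ->
  (exists x y, e x y /\ cross U1 x y) -> (exists x y, e x y /\ cross U2 x y) ->
  ~ adjacent cv (cv S) (cv T).
Proof.
move=> hsplit hdisj [x1 [y1 [e1 c1]]] [x2 [y2 [e2 c2]]].
have crossT x y : e x y -> cross T x y = cross S x y (+) cross U1 x y (+) cross U2 x y.
  by move=> exy; rewrite -addbA -hsplit // cross_symdiff addKb.
apply: (not_adjacent_pt (@cutvec01) (k := symdiff S U1) (l := symdiff S U2)).
- move=> f; have [x [y [exy hf]]] := edge_tP f.
  rewrite !(cutvecE _ exy hf) !cross_symdiff crossT //; move: (hdisj _ _ exy).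
  by case: (cross S x y); case: (cross U1 x y); case: (cross U2 x y); rewrite ?addr0 ?add0r.
- move/(congr1 (fun p => p (edge_of e1)))/eqP.
  by rewrite cutvec_eqE cross_symdiff c1; case: cross.
- have c2' : cross U1 x2 y2 = false by apply/negbTE; move: (hdisj _ _ e2); rewrite c2 andbT.
  move/(congr1 (fun p => p (edge_of e2)))/eqP.
  by rewrite cutvec_eqE cross_symdiff crossT // c2 c2'; case: cross.
Qed.

Section SpanningTree.
Variable r : V.
Hypothesis connected : forall u v, connect e u v.

Fixpoint ball (k : nat) : {set V} :=
  if k is k'.+1 then ball k' :|: [set y | [exists x in ball k', e x y]] else [set r].

Lemma ball_mono k j : (k <= j)%N -> ball k \subset ball j.
Proof.
move=> /subnK <-; elim: (j - k)%N => [|i IH] //=.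
exact: subset_trans IH (subsetUl _ _).
Qed.

Lemma ball_step x y k : x \in ball k -> e x y -> y \in ball k.+1.
Proof.
by move=> hx exy; rewrite /= !inE; apply/orP; right; apply/existsP; exists x; rewrite hx.
Qed.

Lemma ball_path x p k : path e x p -> x \in ball k -> last x p \in ball (k + size p).
Proof.
elim: p x k => [|y p IH] x k /=; first by rewrite addn0.
by case/andP => exy hp hx; rewrite addnS -addSn; apply: IH (ball_step hx exy).
Qed.

Lemma ball_cover v : exists k, v \in ball k.
Proof.
have /connectP [p hp ->] := connected r v; exists (0 + size p)%N.
by apply: ball_path; rewrite //= inE.
Qed.

Definition dist v := ex_minn (ball_cover v).

Lemma dist_ball v : v \in ball (dist v).
Proof. by rewrite /dist; case: ex_minnP. Qed.

Lemma dist_le v k : v \in ball k -> (dist v <= k)%N.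
Proof. by rewrite /dist; case: ex_minnP => m _ h /h. Qed.

Lemma dist_eq0 v : (dist v == 0%N) = (v == r).
Proof.
apply/idP/idP => [/eqP h|/eqP ->]; first by have := dist_ball v; rewrite h /= inE.
by rewrite -leqn0; apply: dist_le; rewrite /= inE.
Qed.

Lemma parent_exists v : v != r -> exists u, e v u && ((dist u).+1 == dist v).
Proof.
move=> hv; have := dist_ball v; have : dist v != 0%N by rewrite dist_eq0.
case hd: (dist v) => [|k] // _ /=; rewrite inE => /orP [hk|].
  by have := dist_le hk; rewrite hd ltnn.
rewrite inE => /existsP [x /andP [hx exv]]; exists x; rewrite e_sym exv /=.
rewrite eqSS eqn_leq dist_le //= leqNgt; apply/negP => hlt.
have := dist_le (subsetP (ball_mono hlt) _ (ball_step (dist_ball x) exv)).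
by rewrite hd ltnn.
Qed.

(* [r] is a junk value, taken only at the root. *)
Definition parent v := if [pick u | e v u && ((dist u).+1 == dist v)] is Some u then u else r.

Lemma parentP v : v != r -> e v (parent v) /\ (dist (parent v)).+1 = dist v.
Proof.
move=> hv; rewrite /parent; case: pickP => [u /andP [h1 /eqP h2]|h] //.
by have [u hu] := parent_exists hv; move: (h u); rewrite hu.
Qed.

Lemma parent_ind (P : V -> Prop) : P r -> (forall u, u != r -> P (parent u) -> P u) ->
  forall u, P u.
Proof.
move=> h0 hs u; elim: {u}(dist u) {-2}u (leqnn (dist u)) => [|k IH] u hu.
  by have /eqP -> : u == r by rewrite -dist_eq0 -leqn0.
have [->|hur] := eqVneq u r; first exact: h0.
by apply: hs => //; apply: IH; have [_ h] := parentP hur; rewrite -ltnS h.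
Qed.

Definition ancestor v u := v \in traject parent u (dist u).+1.

Lemma ancestor_root v : ancestor v r = (v == r).
Proof.
have /eqP dist_r : dist r == 0%N by rewrite dist_eq0.
by rewrite /ancestor dist_r /= inE.
Qed.

Lemma ancestor_parent v u : u != r -> ancestor v u = (v == u) || ancestor v (parent u).
Proof.
by move=> hu; rewrite /ancestor; have [_ <-] := parentP hu; rewrite [traject _ _ _.+1]/= inE.
Qed.

Lemma ancestor_dist v u : ancestor v u -> (dist v <= dist u)%N.
Proof.
elim/parent_ind: u => [|u hu IH]; first by rewrite ancestor_root => /eqP ->.
rewrite ancestor_parent // => /orP [/eqP ->//|/IH]; have [_ <-] := parentP hu.
by move/leq_trans; apply.
Qed.

Definition desc v := [set u | ancestor v u].

Lemma cross_desc v u : u != r -> cross (desc v) u (parent u) = (u == v).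
Proof.
move=> hu; rewrite /cross !inE ancestor_parent //.
have [<-|hne] := eqVneq u v; last by rewrite addbb.
apply/negP => /ancestor_dist; have [_ <-] := parentP hu; by rewrite ltnn.
Qed.

(* [Y] is constant along the tree, hence on all of [V]. *)
Lemma cross_tree_free Y : (forall u, u != r -> ~~ cross Y u (parent u)) ->
  forall x y, ~~ cross Y x y.
Proof.
move=> hY; have root_side u : (u \in Y) = (r \in Y).
  by elim/parent_ind: u => // u hu <-; move: (hY u hu); rewrite /cross negb_add => /eqP.
by move=> x y; rewrite /cross !root_side addbb.
Qed.

Lemma flip_adjacent W v : v != r -> adjacent cv (cv W) (cv (symdiff W (desc v))).
Proof.
move=> hv; have [ev _] := parentP hv.
apply: (adjacent_pt (@cutvec01)).
  move/(congr1 (fun p => p (edge_of ev)))/eqP.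
  by rewrite cutvec_eqE cross_symdiff cross_desc // eqxx; case: cross.
move=> Z hZ.
have agree u : u != r -> u != v -> ~~ cross (symdiff Z W) u (parent u).
  move=> hu huv; have [eu _] := parentP hu.
  have /eqP : cv Z (edge_of eu) = cv W (edge_of eu).
    by apply: hZ; apply/eqP; rewrite cutvec_eqE cross_symdiff cross_desc // (negbTE huv) addbF.
  by rewrite cutvec_eqE cross_symdiff => /eqP ->; rewrite addbb.
case hc: (cross (symdiff Z W) v (parent v)); [right|left];
  apply: eq_cutvec => x y _; apply: cross_tree_free => u hu;
  have [->|huv] := eqVneq u v; try by [rewrite hc | exact: agree].
- by rewrite !cross_symdiff cross_desc // eqxx addbA -cross_symdiff hc.
- by rewrite !cross_symdiff cross_desc // (negbTE huv) addbF -cross_symdiff agree.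
Qed.

Definition tree_cut (Y : {set V}) := [set u | (u != r) && cross Y u (parent u)].

Lemma card_tree_cut_le Y : (#|tree_cut Y| <= #|V| - 1)%N.
Proof.
rewrite subn1 -(cardsC1 r); apply: subset_leq_card; apply/subsetP => u.
by rewrite !inE => /andP [].
Qed.

Lemma card_tree_cut_flip W T v : v \in tree_cut (symdiff W T) ->
  #|tree_cut (symdiff (symdiff W (desc v)) T)| = #|tree_cut (symdiff W T)|.-1.
Proof.
move=> hvc; rewrite (cardsD1 v (tree_cut (symdiff W T))) hvc /=; apply: eq_card => u.
move: hvc; rewrite !inE => /andP [hv hc].
have [->|hu] := eqVneq u r; first by rewrite andbF.
rewrite !cross_symdiff cross_desc //; have [->|huv] := eqVneq u v; last by rewrite addbF.
by rewrite addbT addNb -cross_symdiff hc.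
Qed.

Lemma reach_tree_cut T k W : (#|tree_cut (symdiff W T)| <= k)%N -> reach cv k (cv W) (cv T).
Proof.
elim: k W => [|k IH] W hm.
  apply: eq_cutvec => x y _; apply: cross_tree_free => u hu; apply/negP => hc.
  by move: hm; rewrite leqn0 cards_eq0 => /eqP/setP/(_ u); rewrite !inE hu hc.
have [/eqP|[v hv]] := set_0Vmem (tree_cut (symdiff W T)).
  by rewrite -cards_eq0 => /eqP h0; left; apply: IH; rewrite h0.
right; exists (cv (symdiff W (desc v))); split.
  by apply: flip_adjacent; move: hv; rewrite inE => /andP [].
by apply: IH; rewrite card_tree_cut_flip // -ltnS prednK // (cardsD1 v) hv.
Qed.

Lemma card_tree_cut_le_hamming W T : (#|tree_cut (symdiff W T)| <= hamming (cv W) (cv T))%N.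
Proof.
have [->|[v]] := set_0Vmem (tree_cut (symdiff W T)); first by rewrite cards0.
rewrite inE => /andP [hv _]; have [ev _] := parentP hv.
pose tree_edge u : edge_t e := insubd (edge_of ev) [set u; parent u].
have tree_edgeE u : u != r -> val (tree_edge u) = [set u; parent u].
  by move=> hu; have [eu _] := parentP hu; rewrite val_insubd mem_edges.
rewrite -(card_in_imset (f := tree_edge)); last first.
  move=> u w; rewrite !inE => /andP [hu _] /andP [hw _] /(congr1 val).
  rewrite !tree_edgeE // => /eq_set2 [[//]|[uw wu]].
  have [_ du] := parentP hu; have [_ dw] := parentP hw.
  by move: du dw; rewrite -uw -wu => <-; lia.
apply: subset_leq_card; apply/subsetP => f /imsetP [u]; rewrite !inE => /andP [hu hc] ->.
by have [eu _] := parentP hu; rewrite (cutvec_neq _ _ eu (tree_edgeE u hu)).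
Qed.

Lemma tree_cut_odd_depth : tree_cut (symdiff set0 [set u | odd (dist u)]) = [set~ r].
Proof.
apply/setP => u; rewrite !inE; case hu: (u != r) => //=; have [_ du] := parentP hu.
by rewrite cross_symdiff /cross !inE -du /=; case: odd.
Qed.

End SpanningTree.

Lemma reach_cutvec_vertices (connected : forall u v, connect e u v) p q :
  is_vertex cv p -> is_vertex cv q -> reach cv (#|V| - 1) p q.
Proof.
move=> /vertex_pt [S ->] /vertex_pt [T ->].
have [r _|V0] := pickP (fun _ : V => true).
  exact/reach_tree_cut/(card_tree_cut_le r connected).
rewrite (@eq_cutvec S T) => [|x]; last by have := V0 x.
exact: reach_le (leq0n _) erefl.
Qed.

Lemma hamming_cutvec_lower (connected : forall u v, connect e u v) :
  exists S, (#|V| - 1 <= hamming (cv set0) (cv S))%N.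
Proof.
have [r _|V0] := pickP (fun _ : V => true); last by exists set0; rewrite (eq_card0 V0).
exists [set u | odd (dist r connected u)].
by rewrite subn1 -(cardsC1 r) -tree_cut_odd_depth card_tree_cut_le_hamming.
Qed.

Definition induced (X : {set V}) : rel V := [rel a b | [&& e a b, a \in X & b \in X]].

Definition induced_connected (X : {set V}) :=
  forall x y, x \in X -> y \in X -> connect (induced X) x y.

Lemma connect_cross (A : {set V}) x y : connect e x y -> x \in A -> y \notin A ->
  exists a b, e a b /\ cross A a b.
Proof.
move=> /connectP [p hp ->]; elim: p x hp => [|z p IH] x /=; first by move=> _ ->.
case/andP => exz hp hx hy; case hz: (z \in A); first exact: IH hp hz hy.
by exists x, z; rewrite /cross hx hz.
Qed.

(* The components of [X] containing [x] and not containing it split [delta(X)]. *)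
Lemma split_disconnected (connected : forall u v, connect e u v) (X : {set V}) x y :
  x \in X -> y \in X -> ~~ connect (induced X) x y ->
  exists U1 U2 : {set V},
   [/\ forall a b, cross X a b = cross U1 a b (+) cross U2 a b,
       forall a b, e a b -> ~~ (cross U1 a b && cross U2 a b),
       exists a b, e a b /\ cross U1 a b &
       exists a b, e a b /\ cross U2 a b].
Proof.
move=> hx hy hnc.
pose U1 := [set z | (z \in X) && connect (induced X) x z].
pose U2 := [set z | (z \in X) && ~~ connect (induced X) x z].
have memX z : (z \in X) = (z \in U1) (+) (z \in U2).
  by rewrite !inE; case: (z \in X); case: connect.
have disj z : ~~ ((z \in U1) && (z \in U2)) by rewrite !inE; case: (z \in X); case: connect.
have no_edge a b : e a b -> ~~ ((a \in U1) && (b \in U2)).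
  move=> eab; apply/negP; case/andP; rewrite !inE => /andP [ha ca] /andP [hb /negP]; apply.
  by apply: connect_trans ca (connect1 _); rewrite /induced /= eab ha hb.
exists U1, U2; split.
- by move=> a b; rewrite /cross !memX addbACA.
- move=> a b eab; have eba : e b a by rewrite e_sym.
  have := no_edge a b eab; have := no_edge b a eba.
  move: (disj a) (disj b); rewrite /cross.
  by case: (a \in U1); case: (a \in U2); case: (b \in U1); case: (b \in U2).
- by apply: (connect_cross (connected x y)); rewrite inE ?hx ?hy ?connect0 ?hnc.
- by apply: (connect_cross (connected y x)); rewrite inE ?hx ?hy ?connect0 ?hnc.
Qed.

Lemma path_induced_all (X : {set V}) x p : path (induced X) x p -> all (mem X) p.
Proof.
elim: p x => [|z p IH] x //= /andP [/and3P [_ _ hz] hp].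
by rewrite hz (IH z hp).
Qed.

(* If the only changes of side along [s] are the steps [aj -> bj] and [bi -> ai],
   then these are the only edges of [s] in [delta(U)]. *)
Lemma cycle_cut_edges (U : {set V}) s ai bi aj bj :
  cycle [rel u w | ((u \in U) == (w \in U)) || ((u == aj) && (w == bj))
                   || ((u == bi) && (w == ai))] s ->
  forall a b, [set a; b] \in cycle_edges s -> a \in U -> b \notin U ->
    [set a; b] = [set ai; bi] \/ [set a; b] = [set aj; bj].
Proof.
move=> hcyc a b /imsetP [z hz hab] ha hb; have := next_cycle hcyc hz.
case/eq_set2: hab => [] [<- <-] /=; rewrite ha (negbTE hb) /=;
  case/orP => /andP [/eqP -> /eqP ->];
  first [by left | by right | by left; rewrite setUC | by right; rewrite setUC].
Qed.

(* Joining the two cut edges by a shortest path on each side gives a simple cycle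
   whose only edges in [delta(U)] are these two. *)
Lemma cycle_through_cut_edges U ai bi aj bj :
  connect (induced U) ai aj -> connect (induced (~: U)) bj bi ->
  e ai bi -> e aj bj -> ai \in U -> aj \in U -> bi \notin U -> bj \notin U ->
  [set ai; bi] != [set aj; bj] ->
  exists s, [/\ simple_cycle e s, [set ai; bi] \in cycle_edges s,
     [set aj; bj] \in cycle_edges s &
     forall a b, [set a; b] \in cycle_edges s -> a \in U -> b \notin U ->
        [set a; b] = [set ai; bi] \/ [set a; b] = [set aj; bj]].
Proof.
move=> /connectP [p0 hp0 hl0] /connectP [q0 hq0 hl1] ei ej hai haj hbi hbj hne.
case: (shortenP hp0) hl0 => P hP huP _ hlP.
case: (shortenP hq0) hl1 => Q hQ huQ _ hlQ.
have PU := path_induced_all hP; have QU := path_induced_all hQ.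
pose s := ai :: (P ++ bj :: Q).
have hus : uniq s.
  rewrite /s -cat_cons cat_uniq huP huQ andbT; apply/hasPn => z hz.
  have zO : z \notin U.
    by move: hz; rewrite inE => /orP [/eqP -> //| /(allP QU)]; rewrite /= inE.
  apply: contra zO; rewrite inE => /orP [/eqP -> //|/(allP PU)] //.
have hsz : (2 < size s)%N.
  rewrite /s /= size_cat /=.
  move: hlP hlQ hne; case: P {hP huP PU hus s} => [|p1 P']; case: Q {hQ huQ QU} => [|q1 Q'] /=;
    try lia.
  by move=> -> ->; rewrite eqxx.
have hcyc : cycle e s.
  rewrite /s /= rcons_path cat_path /= -hlP ej /= last_cat /= -hlQ e_sym ei andbT.
  by rewrite (sub_path _ hP) ?(sub_path _ hQ) // => a b /and3P [].
pose side := [rel u w | ((u \in U) == (w \in U)) || ((u == aj) && (w == bj))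
                        || ((u == bi) && (w == ai))].
have hcyc_side : cycle side s.
  rewrite /s /= rcons_path cat_path /= -hlP last_cat /= -hlQ !eqxx !orbT /= andbT.
  by rewrite (sub_path _ hP) ?(sub_path _ hQ) //;
    move=> a b /and3P [_ ha hb]; apply/orP; left; apply/orP; left;
    move: ha hb; rewrite ?inE; do 2 case: (_ \in U).
have next_bi : next s bi = ai.
  have -> : bi = last ai (P ++ bj :: Q) by rewrite last_cat.
  exact: next_last.
have next_aj : next s aj = bj.
  have rot_s : rot (size (ai :: P)) s = bj :: (Q ++ ai :: P) by rewrite rot_size_cat.
  have -> : aj = last bj (Q ++ ai :: P) by rewrite last_cat.
  by rewrite -(next_rot (size (ai :: P)) hus) rot_s next_last // -rot_s rot_uniq.
have aj_s : aj \in s by rewrite hlP /s -cat_cons mem_cat mem_last.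
have bi_s : bi \in s by rewrite hlQ /s inE mem_cat mem_last !orbT.
exists s; split.
- by rewrite /simple_cycle hcyc hus hsz.
- by apply/imsetP; exists bi => //; rewrite next_bi setUC.
- by apply/imsetP; exists aj => //; rewrite next_aj.
- exact: cycle_cut_edges hcyc_side.
Qed.

Lemma cut_edge_oriented S T (f : edge_t e) : cv S f != cv T f ->
  exists a b, [/\ e a b, a \in symdiff S T, b \notin symdiff S T & val f = [set a; b]].
Proof.
have [x [y [exy hf]]] := edge_tP f; rewrite (cutvec_neq _ _ exy hf) /cross.
case hx: (x \in symdiff S T) => /= hy; first by exists x, y; rewrite exy hy.
by exists y, x; rewrite e_sym exy hx hf setUC.
Qed.

(* In a cactus, a cut whose two sides are connected has at most two edges: three of
   them would lie on two distinct cycles sharing an edge. *)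
Lemma hamming_connected_sides (cactus : is_cactus e) S T :
  induced_connected (symdiff S T) -> induced_connected (~: symdiff S T) ->
  (hamming (cv S) (cv T) <= 2)%N.
Proof.
set U := symdiff S T => cU cO; rewrite leqNgt; apply/negP.
move=> /card_gt2P [f1 [f2 [f3 [[h1 h2 h3] [n12 n23 n31]]]]].
move: h1 h2 h3; rewrite !inE => /cut_edge_oriented [a1 [b1 [e1 ha1 hb1 hf1]]].
move=> /cut_edge_oriented [a2 [b2 [e2 ha2 hb2 hf2]]].
move=> /cut_edge_oriented [a3 [b3 [e3 ha3 hb3 hf3]]].
have val_neq (f g : edge_t e) a b c d : f != g -> val f = [set a; b] -> val g = [set c; d] ->
    [set a; b] != [set c; d].
  by move=> hfg <- <-; apply: contra hfg => /eqP /val_inj ->.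
have n13 : f1 != f3 by rewrite eq_sym.
have inO b : b \notin U -> b \in ~: U by rewrite in_setC.
have [s12 [cyc12 in12 _ only12]] := cycle_through_cut_edges (cU _ _ ha1 ha2)
  (cO _ _ (inO _ hb2) (inO _ hb1)) e1 e2 ha1 ha2 hb1 hb2 (val_neq _ _ _ _ _ _ n12 hf1 hf2).
have [s13 [cyc13 in13 in3 _]] := cycle_through_cut_edges (cU _ _ ha1 ha3)
  (cO _ _ (inO _ hb3) (inO _ hb1)) e1 e3 ha1 ha3 hb1 hb3
  (val_neq _ _ _ _ _ _ n13 hf1 hf3).
rewrite -(cactus.2 _ _ cyc12 cyc13 _ in12 in13) in in3.
case: (only12 _ _ in3 ha3 hb3) => h.
  by move: (val_neq _ _ _ _ _ _ n31 hf3 hf1); rewrite h eqxx.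
by move: (val_neq _ _ _ _ _ _ n23 hf2 hf3); rewrite h eqxx.
Qed.

Lemma adjacent_hamming_le2 (cactus : is_cactus e) S T :
  adjacent cv (cv S) (cv T) -> (hamming (cv S) (cv T) <= 2)%N.
Proof.
move=> hadj; set U := symdiff S T.
have side_connected X : (forall a b, cross X a b = cross U a b) -> induced_connected X.
  move=> hX x y hx hy; apply: contraT => hnc.
  have [U1 [U2 [hs hd c1 c2]]] := split_disconnected cactus.1 hx hy hnc.
  have hsplit a b : e a b -> cross U a b = cross U1 a b (+) cross U2 a b.
    by move=> _; rewrite -hX hs.
  by case: (not_adjacent_split hsplit hd c1 c2 hadj).
by apply: (hamming_connected_sides cactus); apply: side_connected => a b; rewrite ?cross_setC.
Qed.

End CutVectors.

Theorem theorem4 (R : realType) (V : finType) (e : rel V)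
  (e_sym : symmetric e) (e_irr : irreflexive e) (cactus : is_cactus e) :
  exists d : nat, is_diameter (@cutvec R V e) d /\
    (#|V|./2 <= d)%N /\ (d <= #|V| - 1)%N.
Proof.
have connected := cactus.1.
pose reach_all k := forall p q, is_vertex (@cutvec R V e) p -> is_vertex (@cutvec R V e) q ->
  reach (@cutvec R V e) k p q.
have [d [reach_d d_min]] :=
  @classic_ex_minn reach_all _ (reach_cutvec_vertices e_sym e_irr connected).
exists d; split.
  split=> // d' /d_min not_reach; apply: NNPP => hn; apply: not_reach => p q hp hq.
  by apply: NNPP => hr; apply: hn; exists p, q.
split; last by rewrite leqNgt; apply/negP => /d_min; apply; exact: reach_cutvec_vertices.
have [S hS] := hamming_cutvec_lower R e_sym e_irr connected.
have vertex_cut W := is_vertex_pt (@cutvec01 R V e) W.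
have := reach_hamming (adjacent_hamming_le2 e_sym e_irr cactus)
  (reach_d _ _ (vertex_cut set0) (vertex_cut S)).
move/(leq_trans hS); move: (odd_double_half #|V|); rewrite -mul2n.
by move: (#|V|./2) #|V| => h n; case: odd => /=; lia.
Qed.
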